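(* Let $W_0$, $W_1$, $W_2$ be the abstract Coxeter groups with the following Coxeter graphs on four nodes: - $W_0=[\infty,3,3]$: linear graph $s_1 - s_2 - s_3 - s_4$ with $m_{12}=\infty$, $m_{23}=m_{34}=3$, all other pairs commuting; - $W_1=[3,\infty,3]$: linear graph $s_1 - s_2 - s_3 - s_4$ with $m_{12}=3$, $m_{23}=\infty$, $m_{34}=3$, all other pairs commuting; - $W_2=[\infty,3^{1,1}]$: a central node $s_2$ joined to $s_1$ by an edge with $m_{12}=\infty$ and to $s_3,s_4$ by edges with $m_{23}=m_{24}=3$, all other pairs commuting. Then their growth rates satisfy $\tau_{W_0}<\tau_{W_1}$ and $\tau_{W_0}<\tau_{W_2}$.
   Context: For a Coxeter system $(W,S)$ (group $W$ generated by a finite set $S$ with relations $s^2=1$ and $(ss')^{m_{ss'}}=1$, $m_{ss'}\in\{2,3,\dots,\infty\}$), the growth series is $f_S(t)=1+\sum_{k\ge1}a_kt^k$ with $a_k$ the number of elements of $S$-word length $k$, and the growth rate $\tau_W$ is the inverse of the radius of convergence of $f_S(t)$ (equivalently $\limsup_k a_k^{1/k}$). *)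

From mathcomp Require Import all_boot all_order all_algebra.
From mathcomp Require Import all_classical all_reals all_analysis.
Set Implicit Arguments. Unset Strict Implicit. Unset Printing Implicit Defensive.
Import Order.TTheory GRing.Theory Num.Theory.

(* A Coxeter matrix on a finite generating set S = 'I_n, given as
   m : 'I_n -> 'I_n -> nat, where the value 0 encodes m_{ss'} = infinity
   (no relation).  The Coxeter group is
   the group <S | s^2 = 1, (s s')^(m_{ss'}) = 1>; since every generator is
   an involution, it is the quotient of the free monoid on S by the
   congruence generated by the relators r ~ [::]. *)

Definition coxeter_relator (n : nat) (m : 'I_n -> 'I_n -> nat)
  (r : seq 'I_n) : Prop :=
  (exists s, r = [:: s; s]) \/
  (exists s s', s != s' /\ (0 < m s s')%N /\
     r = flatten (nseq (m s s') [:: s; s'])).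

Inductive cox_eq (n : nat) (m : 'I_n -> 'I_n -> nat) :
  seq 'I_n -> seq 'I_n -> Prop :=
| cox_eq_rel u r v : coxeter_relator m r -> cox_eq m (u ++ r ++ v) (u ++ v)
| cox_eq_refl u : cox_eq m u u
| cox_eq_sym u v : cox_eq m u v -> cox_eq m v u
| cox_eq_trans u v w : cox_eq m u v -> cox_eq m v w -> cox_eq m u w.

Definition geodesic (n : nat) (m : 'I_n -> 'I_n -> nat) (w : seq 'I_n) : Prop :=
  forall v, cox_eq m v w -> (size w <= size v)%N.

(* a_k = number of elements of W of word length k: count one representative
   (the first in the enumeration order) among the geodesic words of length k
   in each class. *)
Definition growth_coeff (n : nat) (m : 'I_n -> 'I_n -> nat) (k : nat) : nat :=
  #|[set w : k.-tuple 'I_n |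
      `[< geodesic m w >] &&
      [forall v : k.-tuple 'I_n,
         (enum_rank v < enum_rank w)%N ==> ~~ `[< cox_eq m v w >]]]|.

(* growth rate tau_W = limsup_k a_k^(1/k) (= inverse radius of convergence
   of the growth series), as an extended real *)
Definition growth_rate (R : realType) (n : nat) (m : 'I_n -> 'I_n -> nat)
  : \bar R :=
  limn_esup (fun k => (((growth_coeff m k)%:R : R) `^ (k%:R^-1))%:E).

(* Coxeter matrices; generators s1..s4 are indices 0..3; 0 means infinity. *)
Definition mk4 (a b c d e f : nat) (i j : 'I_4) : nat :=
  let p := (minn i j, maxn i j) in
  if i == j then 1%N else
  match p with
  | (0, 1) => a | (0, 2) => b | (0, 3) => c
  | (1, 2) => d | (1, 3) => e | (2, 3) => f
  | _ => 1%N
  end%N.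

(* W0 = [oo,3,3] : m12 = oo, m23 = m34 = 3, others 2 *)
Definition M0 := mk4 0 2 2 3 2 3.
(* W1 = [3,oo,3] : m12 = 3, m23 = oo, m34 = 3, others 2 *)
Definition M1 := mk4 3 2 2 0 2 3.
(* W2 = [oo,3^{1,1}] : m12 = oo, m23 = m24 = 3, others 2 *)
Definition M2 := mk4 0 2 2 3 3 2.

From mathcomp Require Import all_boot all_order all_algebra.
From mathcomp Require Import all_classical all_reals all_analysis.
From mathcomp Require Import zify ring lra.
Set Implicit Arguments. Unset Strict Implicit. Unset Printing Implicit Defensive.
Import Order.TTheory GRing.Theory Num.Theory.

(* For W0 = [oo,3,3] we bound a_k from above.  Each element of length k has a
   representative that is geodesic and least in a fixed lexicographic order;
   such a word has no factor that the Coxeter relations turn into a shorter or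
   lexicographically smaller word.  Ten such factors already restrict the
   representatives to the language of a finite automaton, and a weight function
   on its states shows that it accepts at most 229 (3/2)^k words of length k;
   hence tau_W0 <= 31/20.
   For W1 = [3,oo,3] and W2 = [oo,3^{1,1}] we bound the partial sums of a_k from
   below.  In the integral geometric representation on Z^4, two families of
   blocks of generators play ping-pong, so free concatenations of blocks, of
   lengths 2, 3, 3 and 4, represent pairwise distinct elements.  There are at
   least (8/5)^n / 8 of them of length at most n, hence tau >= 39/25 > 31/20. *)

Lemma size_eq_sum_count (T : Type) (f : T -> nat) k (L : seq T) :
  all (fun x => f x <= k)%N L ->
  size L = (\sum_(j < k.+1) count (fun x => f x == j) L)%N.
Proof.
elim: L => [_ | x L IH] /=; first by rewrite big1.
move=> /andP[fx_le /IH ->]; rewrite big_split /= [in RHS]addnC -addn1; congr (_ + _)%N.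
rewrite -ltnS in fx_le; rewrite (bigD1 (Ordinal fx_le)) //= eqxx big1 // => i.
by move=> i_ne; case: eqP => // fx_i; case/eqP: i_ne; apply: val_inj.
Qed.

Section CoxeterWords.
Variables (n : nat) (m : 'I_n -> 'I_n -> nat).

Lemma cox_eq_ctx u x y v : cox_eq m x y -> cox_eq m (u ++ x ++ v) (u ++ y ++ v).
Proof.
elim=> {x y} [x r y Hr | x | x y _ IH | x y z _ IHxy _ IHyz].
- have -> : u ++ (x ++ r ++ y) ++ v = (u ++ x) ++ r ++ (y ++ v) by rewrite !catA.
  have -> : u ++ (x ++ y) ++ v = (u ++ x) ++ (y ++ v) by rewrite !catA.
  exact: cox_eq_rel.
- exact: cox_eq_refl.
- exact: cox_eq_sym IH.
- exact: cox_eq_trans IHxy IHyz.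
Qed.

Lemma cox_eq_foldr (X : Type) (act : 'I_n -> X -> X) :
  (forall r x, coxeter_relator m r -> foldr act x r = x) ->
  forall u v, cox_eq m u v -> forall x, foldr act x u = foldr act x v.
Proof.
move=> act_rel u v; elim=> {u v} [u r v Hr | u | u v _ IH | u v w _ IHuv _ IHvw] x.
- by rewrite !foldr_cat (act_rel _ _ Hr).
- by [].
- by rewrite IH.
- by rewrite IHuv IHvw.
Qed.

Lemma cox_length_exists w : exists j, `[< exists t, size t = j /\ cox_eq m t w >].
Proof. by exists (size w); apply/asboolP; exists w; split; last exact: cox_eq_refl. Qed.

Definition cox_length w : nat := ex_minn (cox_length_exists w).

Lemma cox_lengthP w :
  (exists t, size t = cox_length w /\ cox_eq m t w) /\
  forall v, cox_eq m v w -> (cox_length w <= size v)%N.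
Proof.
rewrite /cox_length; case: ex_minnP => j /asboolP Hj j_min; split => // v Hv.
by apply: j_min; apply/asboolP; exists v.
Qed.

Lemma cox_length_le_size w : (cox_length w <= size w)%N.
Proof. by apply: (cox_lengthP w).2; apply: cox_eq_refl. Qed.

Lemma count_cox_length_le (j : nat) (L : seq (seq 'I_n)) : uniq L ->
  {in L &, forall w w', cox_eq m w w' -> w = w'} ->
  (count (fun w => cox_length w == j) L <= growth_coeff m j)%N.
Proof.
move=> uL L_inj; rewrite -size_filter; set Lj := seq.filter _ L.
have rep_tuple w : w \in Lj -> exists t : j.-tuple 'I_n, cox_eq m t w.
  rewrite mem_filter => /andP[/eqP lw _]; have [[t [st ct]] _] := cox_lengthP w.
  have st' : size t == j by rewrite st lw.
  by exists (Tuple st').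
have [t0 _ | no_tuple] := pickP (@predT (j.-tuple 'I_n)); last first.
  case: Lj rep_tuple => [//|w Lj'] /(_ w (mem_head _ _))[t _].
  by have := no_tuple t.
pose rep w := odflt t0 [pick t : j.-tuple 'I_n | `[< cox_eq m t w >]].
pose g w := [arg min_(t < rep w | `[< cox_eq m t w >]) enum_rank t].
have gP w : w \in Lj -> cox_eq m (g w) w /\
    forall t : j.-tuple 'I_n, cox_eq m t w -> (enum_rank (g w) <= enum_rank t)%N.
  move=> /rep_tuple[t ct].
  have rep_eq : `[< cox_eq m (rep w) w >].
    by rewrite /rep; case: pickP => [//|/(_ t)]; rewrite asboolT.
  rewrite /g; case: arg_minnP => // t1 /asboolP ct1 t1_min; split => // t' ct'.
  by apply: t1_min; apply/asboolP.
have LjL w : w \in Lj -> w \in L by rewrite mem_filter => /andP[].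
have g_inj : {in Lj &, injective g}.
  move=> w1 w2 w1L w2L E; apply: L_inj; [exact: LjL | exact: LjL |].
  by apply: cox_eq_trans (cox_eq_sym (gP _ w1L).1) _; rewrite E; exact: (gP _ w2L).1.
rewrite -(size_map g) -(card_uniqP _); last by rewrite map_inj_in_uniq ?filter_uniq.
apply: subset_leq_card; apply/fintype.subsetP => _ /mapP[w wL ->].
have [gw_eq gw_min] := gP _ wL.
rewrite inE; apply/andP; split.
  apply/asboolP => v Hv; rewrite size_tuple.
  move: wL; rewrite mem_filter => /andP[/eqP <- _].
  exact: (cox_lengthP w).2 (cox_eq_trans Hv gw_eq).
apply/forallP => v; apply/implyP => lt; apply/negP => /asboolP Hv.
by have := gw_min v (cox_eq_trans Hv gw_eq); rewrite leqNgt lt.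
Qed.

Lemma size_le_sum_growth_coeff k (L : seq (seq 'I_n)) : uniq L ->
  {in L, forall w, size w <= k}%N ->
  {in L &, forall w w', cox_eq m w w' -> w = w'} ->
  (size L <= \sum_(j < k.+1) growth_coeff m j)%N.
Proof.
move=> uL L_size L_inj; rewrite (@size_eq_sum_count _ cox_length k).
  by apply: leq_sum => j _; apply: count_cox_length_le.
by apply/allP => w wL; apply: leq_trans (cox_length_le_size w) (L_size _ wL).
Qed.

Definition cox_least (code : seq 'I_n -> nat) w :=
  forall v, size v = size w -> cox_eq m v w -> (code w <= code v)%N.

Lemma growth_coeff_le_size (code : seq 'I_n -> nat) k (A : seq (seq 'I_n)) :
  (forall w, size w = k -> geodesic m w -> cox_least code w -> w \in A) ->
  (growth_coeff m k <= size A)%N.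
Proof.
move=> A_complete; rewrite /growth_coeff; set S := [set w : k.-tuple 'I_n | _].
pose least (w : k.-tuple 'I_n) := [arg min_(t < w | `[< cox_eq m t w >]) code t].
have leastP w : cox_eq m (least w) w /\
    forall t : k.-tuple 'I_n, cox_eq m t w -> (code (least w) <= code t)%N.
  rewrite /least; case: arg_minnP => [|t /asboolP ct t_min].
    by apply/asboolP; apply: cox_eq_refl.
  by split => // t' ct'; apply: t_min; apply/asboolP.
have least_inj : {in S &, injective least}.
  move=> w1 w2; rewrite !inE => /andP[_ /forallP w1_min] /andP[_ /forallP w2_min] E.
  have e12 : cox_eq m w1 w2.
    by apply: cox_eq_trans (cox_eq_sym (leastP w1).1) _; rewrite E; exact: (leastP w2).1.
  case: (ltngtP (enum_rank w1) (enum_rank w2)) => [lt|lt|/val_inj/enum_rank_inj //].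
  - by have := w2_min w1; rewrite lt /= => /negP; case; apply/asboolP.
  - by have := w1_min w2; rewrite lt /= => /negP; case; apply/asboolP; apply: cox_eq_sym.
rewrite -(card_in_imset least_inj).
apply: (@leq_trans #|[set t : k.-tuple 'I_n | tval t \in A]|).
  apply: subset_leq_card; apply/fintype.subsetP => _ /imsetP[w wS ->].
  have [lw_eq lw_min] := leastP w; rewrite inE; apply: A_complete; first exact: size_tuple.
    move: wS; rewrite inE => /andP[/asboolP w_geo _] v Hv.
    by rewrite size_tuple -(size_tuple w); apply: w_geo; apply: cox_eq_trans Hv lw_eq.
  move=> v szv Hv; have szv' : size v == k by rewrite szv size_tuple.
  exact: (lw_min (Tuple szv') (cox_eq_trans Hv lw_eq)).
apply: (@leq_trans #|pmap insub A : seq (k.-tuple 'I_n)|); last first.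
  by apply: leq_trans (card_size _) _; rewrite size_pmap count_size.
by apply: subset_leq_card; apply/fintype.subsetP => t; rewrite inE mem_pmap_sub.
Qed.

Definition shortlex_lt (code : seq 'I_n -> nat) (q p : seq 'I_n) : bool :=
  (size q < size p)%N || ((size q == size p) && (code q < code p)%N).

Lemma geodesic_least_factor (code : seq 'I_n -> nat) w u p v q :
  (forall u p q v, size q = size p -> (code q < code p)%N ->
     (code (u ++ q ++ v) < code (u ++ p ++ v))%N) ->
  geodesic m w -> cox_least code w -> w = u ++ p ++ v ->
  cox_eq m p q -> ~~ shortlex_lt code q p.
Proof.
move=> code_ctx w_geo w_least w_uv pq; apply/negP.
have qw : cox_eq m (u ++ q ++ v) w by rewrite w_uv; apply/cox_eq_ctx/cox_eq_sym.
case/orP=> [|/andP[/eqP sz lt]].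
  by have := w_geo _ qw; rewrite w_uv !size_cat leq_add2l leq_add2r leqNgt => /negP.
have szw : size (u ++ q ++ v) = size w by rewrite w_uv !size_cat sz.
by have := w_least _ szw qw; rewrite w_uv leqNgt code_ctx.
Qed.

Definition relator_step (rels : seq (seq 'I_n)) (x y : seq 'I_n) : bool :=
  has (fun i => has (fun r => y == take i x ++ r ++ drop i x) rels) (iota 0 (size x).+1).

Definition rewrite_step rels x y := relator_step rels x y || relator_step rels y x.

Lemma rewrite_path_cox_eq (rels : seq (seq 'I_n)) x l :
  (forall r, r \in rels -> coxeter_relator m r) ->
  path (rewrite_step rels) x l -> cox_eq m x (last x l).
Proof.
move=> relsP; have stepP x' y : relator_step rels x' y -> cox_eq m y x'.
  move=> /hasP[i _ /hasP[r /relsP r_rel /eqP ->]].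
  by rewrite -{3}(cat_take_drop i x'); apply: cox_eq_rel.
elim: l x => [|y l IH] x /=; first by move=> _; apply: cox_eq_refl.
move=> /andP[xy /IH y_last]; apply: cox_eq_trans y_last.
by case/orP: xy => [/stepP/cox_eq_sym | /stepP].
Qed.
End CoxeterWords.

Section FactorAutomaton.
Variables (n : nat) (alph : seq 'I_n) (forb : seq (seq 'I_n)) (d : nat).
Hypothesis alph_full : forall x, x \in alph.

Definition window (s : seq 'I_n) := drop (size s - d) s.
Definition allowed s x := all (fun p => ~~ suffix p (rcons s x)) forb.
Definition next_state s x := window (rcons s x).

Fixpoint accepted_words k s : seq (seq 'I_n) :=
  if k is k'.+1 then
    flatten [seq [seq x :: e | e <- accepted_words k' (next_state s x)]
            | x <- alph & allowed s x]
  else [:: [::]].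

Fixpoint accepts s e : bool :=
  if e is x :: e' then allowed s x && accepts (next_state s x) e' else true.

Lemma accepts_mem e s : accepts s e -> e \in accepted_words (size e) s.
Proof.
elim: e s => [|x e IH] s /=; first by rewrite inE.
move=> /andP[x_ok e_ok]; apply/flattenP.
exists [seq x :: e' | e' <- accepted_words (size e) (next_state s x)].
  by apply/mapP; exists x; rewrite ?mem_filter ?x_ok ?alph_full.
by rewrite mem_map ?IH // => a b [].
Qed.

Lemma next_state_window pre x : next_state (window pre) x = window (rcons pre x).
Proof.
rewrite /next_state /window -drop_rcons ?leq_subr // drop_drop size_drop !size_rcons.
by congr drop; lia.
Qed.

Lemma factor_free_accepts pre e :
  (forall u p v, pre ++ e = u ++ p ++ v -> p \notin forb) -> accepts (window pre) e.
Proof.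
elim: e pre => [//|x e IH] pre e_free /=; apply/andP; split.
  apply/allP => p p_forb; apply/negP => p_suf.
  have window_suf : suffix (rcons (window pre) x) (rcons pre x).
    by apply/suffixP; exists (take (size pre - d) pre); rewrite -rcons_cat cat_take_drop.
  have /suffixP[u E] := suffix_trans p_suf window_suf.
  have E' : pre ++ x :: e = u ++ p ++ e by rewrite -cat_rcons E catA.
  by have := e_free _ _ _ E'; rewrite p_forb.
rewrite next_state_window; apply: IH => u p v E; apply: e_free.
by rewrite -cat_rcons E.
Qed.

Lemma size_accepted_words_le (a b : nat) (states : seq (seq 'I_n)) (wt : seq 'I_n -> nat) :
  all (fun s => [&& 0 < wt s,
      b * sumn [seq wt (next_state s x) | x <- alph & allowed s x] <= a * wt s
    & all (fun x => allowed s x ==> (next_state s x \in states)) alph])%N states ->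
  forall k s, s \in states -> (size (accepted_words k s) * b ^ k <= wt s * a ^ k)%N.
Proof.
move=> wt_ok; elim=> [|k IH] s /(allP wt_ok)/and3P[wt_pos wt_sum closed].
  by rewrite /= !muln1.
rewrite sumnE big_map big_filter in wt_sum.
rewrite /= size_flatten /shape sumnE !big_map big_filter.
under eq_bigr do rewrite size_map.
rewrite expnS mulnCA big_distrl /=.
apply: (@leq_trans (b * (\sum_(x <- alph | allowed s x) wt (next_state s x)) * a ^ k)).
  rewrite -mulnA leq_mul2l big_distrl leq_sum ?orbT // => x x_ok.
  by apply: IH; have /allP/(_ x (alph_full x)) := closed; rewrite x_ok.
by rewrite expnS mulnA [wt s * a]mulnC leq_mul2r wt_sum orbT.
Qed.
End FactorAutomaton.

Section RootGrowth.
Variable R : realType.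
Local Open Scope ring_scope.

Definition root_seq (a : nat -> nat) : (\bar R)^nat :=
  fun k => (((a k)%:R : R) `^ (k%:R^-1))%:E.

Lemma limn_esupE (u : (\bar R)^nat) : limn_esup u = ereal_inf (range (esups u)).
Proof. by rewrite limn_esup_lim; apply/cvg_lim => //; exact: cvg_esups_inf. Qed.

Lemma limn_esup_le_esups (u : (\bar R)^nat) N : (limn_esup u <= esups u N)%E.
Proof. by rewrite limn_esupE; apply: ereal_inf_lbound; exists N. Qed.

Lemma limn_esup_ge (u : (\bar R)^nat) x :
  (forall N, x <= esups u N)%E -> (x <= limn_esup u)%E.
Proof. by move=> x_le; rewrite limn_esupE; apply: le_ereal_inf_tmp => _ [N _ <-]. Qed.

Lemma powR_exprnV (x : R) k : (0 < k)%N -> 0 <= x -> (x ^+ k) `^ (k%:R^-1) = x.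
Proof.
move=> k_gt0 x_ge0; have kR : (k%:R : R) != 0 by rewrite pnatr_eq0 -lt0n.
by rewrite -powR_mulrn // -powRrM mulfV // powRr1.
Qed.

Lemma ler_powRV (x y : R) k : 0 <= x -> x <= y -> x `^ (k%:R^-1) <= y `^ (k%:R^-1).
Proof.
move=> x_ge0 xy; apply: ge0_ler_powR; rewrite ?nnegrE ?invr_ge0 //.
exact: le_trans xy.
Qed.

Lemma limn_esup_root_le (a : nat -> nat) (x : R) K : 0 <= x ->
  (forall k, (K < k)%N -> (a k)%:R <= x ^+ k) -> (limn_esup (root_seq a) <= x%:E)%E.
Proof.
move=> x_ge0 a_le; apply: le_trans (limn_esup_le_esups _ K.+1) _.
apply: ge_ereal_sup => _ [k /= Kk <-]; rewrite lee_fin.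
have k_gt0 : (0 < k)%N by apply: leq_ltn_trans Kk.
by rewrite -[leRHS](powR_exprnV k_gt0 x_ge0); apply: ler_powRV => //; apply: a_le.
Qed.

Lemma bernoulli_ineq (h : R) k : 0 <= h -> 1 + k%:R * h <= (1 + h) ^+ k.
Proof.
move=> h_ge0; elim: k => [|k IH]; first by rewrite mul0r addr0 expr0.
have hk_ge0 : 0 <= k%:R * h * h by rewrite !mulr_ge0.
rewrite exprS -natr1; apply: le_trans (ler_wpM2l _ IH); first nra.
by rewrite addr_ge0.
Qed.

Lemma exists_linear_lt_expr (c r D : R) : 0 < c -> 1 < r -> 0 <= D ->
  exists k : nat, D + k.+1%:R < c * r ^+ k.
Proof.
move=> c_gt0 r_gt1 D_ge0; set h := r - 1.
have h_gt0 : 0 < h by rewrite subr_gt0.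
have ch2_gt0 : 0 < c * h ^+ 2 by rewrite mulr_gt0 // exprn_gt0.
set m := (Num.truncn ((D + 3) / (c * h ^+ 2))).+1.
have m_big : D + 3 < m%:R * (c * h ^+ 2) by rewrite -ltr_pdivrMr // truncnS_gt.
have m_ge1 : (1 : R) <= m%:R by rewrite ler1n.
exists (m + m)%N.
have rE : r = 1 + h by rewrite /h addrC subrK.
have mh_ge0 : 0 <= m%:R * h by rewrite mulr_ge0 // ltW.
have sq_le : (1 + m%:R * h) ^+ 2 <= r ^+ (m + m).
  rewrite exprD rE expr2; apply: ler_pM; rewrite ?addr_ge0 //;
  exact: bernoulli_ineq (ltW h_gt0).
apply: lt_le_trans (ler_wpM2l (ltW c_gt0) sq_le).
rewrite -addn1 !natrD; move: m_big; rewrite expr2 /=; nra.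
Qed.

Lemma exists_linear_mul_lt_expr (c lam mu D : R) : 0 < c -> 1 <= mu -> mu < lam ->
  0 <= D -> exists k : nat, D + k.+1%:R * mu ^+ k < c * lam ^+ k.
Proof.
move=> c_gt0 mu_ge1 mu_lt_lam D_ge0; have mu_gt0 : 0 < mu by lra.
have [k Hk] : exists k : nat, D + k.+1%:R < c * (lam / mu) ^+ k.
  by apply: exists_linear_lt_expr; rewrite // ltr_pdivlMr // mul1r.
exists k; have muk_ge1 : 1 <= mu ^+ k by rewrite exprn_ege1.
have -> : c * lam ^+ k = c * (lam / mu) ^+ k * mu ^+ k.
  by rewrite -mulrA -exprMn divfK // gt_eqF.
apply: le_lt_trans (_ : (D + k.+1%:R) * mu ^+ k < _); last first.
  by rewrite ltr_pM2r // (lt_le_trans ltr01).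
by rewrite mulrDl lerD2r ler_peMr.
Qed.

Lemma sum_le_linear_mul_expr (a : nat -> nat) (mu : R) N : 1 <= mu ->
  (forall k, (N < k)%N -> (a k)%:R <= mu ^+ k) ->
  forall k, (\sum_(j < k.+1) a j)%:R <= (\sum_(j < N.+1) a j)%:R + k.+1%:R * mu ^+ k.
Proof.
move=> mu_ge1 a_le; have mu_ge0 : 0 <= mu by lra.
elim=> [|k IH].
  rewrite expr0 mulr1 -natrD ler_nat !big_ord_recl !big_ord0 /=.
  by rewrite addn0 -addnA leq_addr.
case: (leqP k.+1 N) => kN.
  apply: le_trans (_ : (\sum_(j < N.+1) a j)%:R <= _); last first.
    by rewrite lerDl mulr_ge0 ?exprn_ge0.
  rewrite ler_nat -!(big_mkord xpredT) (big_cat_nat (n := k.+2) (p := N.+1)) //=.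
  exact: leq_addr.
rewrite big_ord_recr /= natrD -[k.+2%:R]natr1 mulrDl mul1r addrA.
apply: lerD; last exact: a_le.
by apply: le_trans IH _; rewrite lerD2l ler_wpM2l // ler_weXn2l.
Qed.

Lemma limn_esup_root_ge (a : nat -> nat) (c lam mu : R) : 0 < c -> 1 <= mu -> mu < lam ->
  (forall k, c * lam ^+ k <= (\sum_(j < k.+1) a j)%:R) ->
  (mu%:E <= limn_esup (root_seq a))%E.
Proof.
move=> c_gt0 mu_ge1 mu_lt_lam sum_ge; apply: limn_esup_ge => N.
have [[k [Nk a_ge]] | a_small] :=
  pselect (exists k, (N < k)%N /\ mu ^+ k <= (a k)%:R).
  apply: le_ereal_sup_tmp; exists (root_seq a k); first by exists k => //; apply: ltnW.
  have k_gt0 : (0 < k)%N by apply: leq_ltn_trans Nk.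
  rewrite lee_fin -[leLHS](powR_exprnV k_gt0 (_ : 0 <= mu)); last lra.
  by apply: ler_powRV; rewrite // exprn_ge0 //; lra.
have a_le k : (N < k)%N -> (a k)%:R <= mu ^+ k.
  by move=> Nk; rewrite leNgt; apply/negP => /ltW ak; apply: a_small; exists k.
have [k Hk] := exists_linear_mul_lt_expr (D := (\sum_(j < N.+1) a j)%:R)
  c_gt0 mu_ge1 mu_lt_lam (ler0n _ _).
exfalso; have := sum_le_linear_mul_expr mu_ge1 a_le k; have := sum_ge k; lra.
Qed.
End RootGrowth.

Section PingPong.
Variables (X : Type) (n : nat) (act : 'I_n -> X -> X).
Hypothesis act_invol : forall i, involutive (act i).
Variables (U : eqType) (blockA blockB : U -> seq 'I_n) (RA RB : U -> X -> Prop) (x0 : X).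
Hypothesis blockB_to_RB :
  forall u x, (x = x0 \/ exists u', RA u' x) -> RB u (foldr act x (blockB u)).
Hypothesis blockA_to_RA : forall u x, RB u x -> RA u (foldr act x (blockA u)).
Hypothesis RA_disjoint : forall u u' x, RA u x -> RA u' x -> blockA u = blockA u'.
Hypothesis RB_disjoint : forall u u' x, RB u x -> RB u' x -> blockB u = blockB u'.
Hypothesis x0_notin_RA : forall u, ~ RA u x0.
Hypothesis blocks_inj : forall u u', blockA u = blockA u' -> blockB u = blockB u' -> u = u'.

Definition block_word (c : seq U) : seq 'I_n := flatten [seq blockA u ++ blockB u | u <- c].

Lemma block_word_cons u c : block_word (u :: c) = blockA u ++ blockB u ++ block_word c.
Proof. by rewrite /block_word /= catA. Qed.

Lemma foldr_act_rev w x : foldr act (foldr act x w) (rev w) = x.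
Proof. by elim: w x => //= i w IH x; rewrite rev_cons -cats1 foldr_cat /= act_invol. Qed.

Lemma foldr_act_inj w : injective (fun x => foldr act x w).
Proof. by move=> x y /(congr1 (fun z => foldr act z (rev w))); rewrite !foldr_act_rev. Qed.

Lemma block_word_region c : c = [::] \/ exists u c', c = u :: c' /\
  RA u (foldr act x0 (block_word c)) /\ RB u (foldr act x0 (blockB u ++ block_word c')).
Proof.
elim: c => [|u c IH]; [by left | right; exists u, c].
have HB : RB u (foldr act x0 (blockB u ++ block_word c)).
  rewrite foldr_cat; apply: blockB_to_RB.
  by case: IH => [-> | [u' [c' [_ [H _]]]]]; [left | right; exists u'].
by do 2!split=> //; rewrite block_word_cons foldr_cat; apply: blockA_to_RA.
Qed.

Lemma pingpong_inj : injective (fun c => foldr act x0 (block_word c)).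
Proof.
elim=> [|u c IH] c' /=.
  case: (block_word_region c') => [-> // | [u' [c'' [-> [HA _]]]] E].
  by rewrite -E in HA; case: (x0_notin_RA HA).
case: (block_word_region (u :: c)) => [// | [_ [_ [[<- <-] [HA HB]]]]].
case: (block_word_region c') => [-> E | [u' [c'' [-> [HA' HB']]]] E].
  by rewrite E in HA; case: (x0_notin_RA HA).
rewrite E in HA; have eA := RA_disjoint HA HA'.
have E2 : foldr act x0 (blockB u ++ block_word c) = foldr act x0 (blockB u' ++ block_word c'').
  by apply: (@foldr_act_inj (blockA u)); move: E; rewrite !block_word_cons !foldr_cat eA.
rewrite E2 in HB; have eB := RB_disjoint HB HB'.
rewrite (blocks_inj eA eB); congr (_ :: _); apply: IH.
by apply: (@foldr_act_inj (blockB u)); move: E2; rewrite !foldr_cat eB.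
Qed.
End PingPong.

Definition l0 : 'I_4 := @Ordinal 4 0 isT.
Definition l1 : 'I_4 := @Ordinal 4 1 isT.
Definition l2 : 'I_4 := @Ordinal 4 2 isT.
Definition l3 : 'I_4 := @Ordinal 4 3 isT.

(* An explicit enumeration of 'I_4: [enum 'I_4] does not reduce under vm_compute. *)
Definition ord4 : seq 'I_4 := [:: l0; l1; l2; l3].

Lemma mem_ord4 (x : 'I_4) : x \in ord4.
Proof. by case: x => [[|[|[|[|?]]]] ?] //; rewrite !inE; apply/orP; left; apply/eqP/val_inj. Qed.

(* Base-4 code of a word for the letter order l3 < l2 < l1 < l0; the forbidden
   factors below are computed for this order. *)
Definition word_code (w : seq 'I_4) : nat :=
  foldl (fun c (x : 'I_4) => c * 4 + (3 - x))%N 0%N w.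

Lemma word_code_cat s t : word_code (s ++ t) = (word_code s * 4 ^ size t + word_code t)%N.
Proof.
have foldl_code c u : foldl (fun c (x : 'I_4) => c * 4 + (3 - x))%N c u =
    (c * 4 ^ size u + word_code u)%N.
  rewrite /word_code; elim: u c => [|x u IH] c /=; first by rewrite muln1 addn0.
  by rewrite IH [in RHS]IH expnS; lia.
by rewrite {1}/word_code foldl_cat foldl_code.
Qed.

Lemma word_code_ctx u p q v : size q = size p -> (word_code q < word_code p)%N ->
  (word_code (u ++ q ++ v) < word_code (u ++ p ++ v))%N.
Proof.
move=> sz lt; rewrite !word_code_cat !size_cat sz ltn_add2l ltn_add2r.
by rewrite ltn_pmul2r // expn_gt0.
Qed.

Definition M0_relators : seq (seq 'I_4) := [seq [:: s; s] | s <- ord4] ++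
  [seq flatten (nseq (M0 st.1 st.2) [:: st.1; st.2]) |
     st <- [seq (s, t) | s <- ord4, t <- ord4] & (st.1 != st.2) && (0 < M0 st.1 st.2)%N].

Lemma M0_relatorsP r : r \in M0_relators -> coxeter_relator M0 r.
Proof.
rewrite mem_cat => /orP[/mapP[s _ ->] | /mapP[[s t] + ->]]; first by left; exists s.
by rewrite mem_filter /= => /andP[/andP[st_ne m_gt0] _]; right; exists s, t.
Qed.

(* Each forbidden factor p comes with a chain of relator insertions and deletions
   leading from p to a shortlex-smaller word. *)
Definition M0_reductions : seq (seq 'I_4 * seq (seq 'I_4)) := [::
  ([:: l0; l0], [:: [::]]);
  ([:: l0; l2], [:: [:: l2; l2; l0; l2]; [:: l2; l0; l0; l2; l0; l2]; [:: l2; l0]]);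
  ([:: l0; l3], [:: [:: l3; l3; l0; l3]; [:: l3; l0; l0; l3; l0; l3]; [:: l3; l0]]);
  ([:: l1; l1], [:: [::]]);
  ([:: l1; l3], [:: [:: l3; l3; l1; l3]; [:: l3; l1; l1; l3; l1; l3]; [:: l3; l1]]);
  ([:: l2; l2], [:: [::]]);
  ([:: l3; l3], [:: [::]]);
  ([:: l1; l2; l1], [:: [:: l2; l2; l1; l2; l1]; [:: l2; l1; l1; l2; l1; l2; l1];
                        [:: l2; l1; l2; l2; l1; l2; l1; l2; l1]; [:: l2; l1; l2]]);
  ([:: l2; l3; l2], [:: [:: l3; l3; l2; l3; l2]; [:: l3; l2; l2; l3; l2; l3; l2];
                        [:: l3; l2; l3; l3; l2; l3; l2; l3; l2]; [:: l3; l2; l3]]);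
  ([:: l1; l2; l3; l1], [:: [:: l2; l1; l2; l1; l2; l1; l1; l2; l3; l1];
                           [:: l2; l1; l2; l1; l2; l2; l3; l1];
                           [:: l2; l1; l2; l3; l3; l1; l2; l2; l3; l1];
                           [:: l2; l1; l2; l3; l3; l1; l3; l1]; [:: l2; l1; l2; l3]])].

Definition M0_forbidden : seq (seq 'I_4) := map fst M0_reductions.

Lemma M0_forbidden_reducible p : p \in M0_forbidden ->
  exists2 q, cox_eq M0 p q & shortlex_lt word_code q p.
Proof.
have reductions_ok : all (fun pl => path (rewrite_step M0_relators) pl.1 pl.2 &&
    shortlex_lt word_code (last pl.1 pl.2) pl.1) M0_reductions by vm_compute.
move=> /mapP[[p' l] /(allP reductions_ok)/andP[pl_path pl_lt] ->] /=.
by exists (last p' l); first exact: rewrite_path_cox_eq M0_relatorsP pl_path.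
Qed.

Definition M0_automaton_words k := accepted_words ord4 M0_forbidden 3 k [::].

Lemma growth_coeff_M0_le k : (growth_coeff M0 k <= size (M0_automaton_words k))%N.
Proof.
apply: (growth_coeff_le_size (code := word_code)) => w <- w_geo w_least.
apply: (accepts_mem mem_ord4); apply: (@factor_free_accepts _ _ 3 [::]).
move=> u p v /= w_uv; apply/negP => /M0_forbidden_reducible[q pq].
by apply/negP; apply: geodesic_least_factor word_code_ctx w_geo w_least w_uv pq.
Qed.

(* Weights certifying that the automaton, whose states are the last three letters
   read, accepts at most 229 (3/2)^k words of length k. *)
Definition M0_weights : seq (seq 'I_4 * nat) := [::
  ([::], 229);
  ([:: l0], 39); ([:: l1], 57); ([:: l2], 109); ([:: l3], 138);
  ([:: l0; l1], 57); ([:: l1; l0], 39); ([:: l1; l2], 45); ([:: l2; l0], 39);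
  ([:: l2; l1], 57); ([:: l2; l3], 65); ([:: l3; l0], 39); ([:: l3; l1], 57);
  ([:: l3; l2], 109);
  ([:: l0; l1; l0], 39); ([:: l0; l1; l2], 45); ([:: l1; l0; l1], 57);
  ([:: l1; l2; l0], 39); ([:: l1; l2; l3], 27); ([:: l2; l0; l1], 57);
  ([:: l2; l1; l0], 39); ([:: l2; l1; l2], 45); ([:: l2; l3; l0], 39);
  ([:: l2; l3; l1], 57); ([:: l3; l0; l1], 57); ([:: l3; l1; l0], 39);
  ([:: l3; l1; l2], 45); ([:: l3; l2; l0], 39); ([:: l3; l2; l1], 57);
  ([:: l3; l2; l3], 65)]%N.

Definition M0_weight (s : seq 'I_4) : nat :=
  head 0%N [seq sw.2 | sw <- M0_weights & sw.1 == s].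

Lemma size_M0_automaton_words k : (size (M0_automaton_words k) * 2 ^ k <= 229 * 3 ^ k)%N.
Proof.
apply: (size_accepted_words_le mem_ord4 (states := map fst M0_weights) (wt := M0_weight)).
  by vm_compute.
by rewrite inE.
Qed.

Section GrowthRateW0.
Variable R : realType.
Local Open Scope ring_scope.

Lemma growth_rate_M0_le : (growth_rate R M0 <= (31/20 : R)%:E)%E.
Proof.
apply: (limn_esup_root_le (K := 6840)) => [|k Kk]; first lra.
have a_le : (growth_coeff M0 k)%:R * 2 ^+ k <= 229 * 3 ^+ k :> R.
  rewrite -natrX -natrM -natrX -natrM ler_nat.
  exact: leq_trans (leq_mul (growth_coeff_M0_le k) (leqnn _)) (size_M0_automaton_words k).
have big_k : 229 <= (1 + 1/30 : R) ^+ k.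
  have : (6841 : R) <= k%:R by rewrite ler_nat.
  by move=> k_ge; apply: le_trans (bernoulli_ineq k _); lra.
have -> : (31/20 : R) = 3/2 * (1 + 1/30) by field.
rewrite exprMn expr_div_n; apply: le_trans (_ : 229 * (3 ^+ k / 2 ^+ k) <= _).
  by rewrite mulrA ler_pdivlMr ?exprn_gt0.
by rewrite mulrC ler_wpM2l // divr_ge0 // exprn_ge0.
Qed.
End GrowthRateW0.


Section GeometricRepresentation.
Local Open Scope ring_scope.

Definition vec := (int * int * int * int)%type.

Definition coord (f : vec) (i : 'I_4) : int :=
  let '(a, b, c, d) := f in
  match val i with 0%N => a | 1%N => b | 2%N => c | _ => d end.

(* Twice the form -cos(pi / m_ij) of the geometric representation, for m_ij in
   {2, 3, oo} (oo is encoded by 0). *)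
Definition cartan (m : 'I_4 -> 'I_4 -> nat) (i j : 'I_4) : int :=
  if i == j then 2 else match m i j with 0%N => -2 | 3%N => -1 | _ => 0 end.

Definition reflection m (i : 'I_4) (f : vec) : vec :=
  let x := coord f i in
  (coord f l0 - cartan m i l0 * x, coord f l1 - cartan m i l1 * x,
   coord f l2 - cartan m i l2 * x, coord f l3 - cartan m i l3 * x).

Lemma reflection_invol m i : involutive (reflection m i).
Proof.
case=> [[[a b] c] d]; case: i => [[|[|[|[|?]]]] ?] //;
by rewrite /reflection /cartan /coord /=; congr (_, _, _, _); ring.
Qed.

Lemma reflection_relator m r f : m = M1 \/ m = M2 -> coxeter_relator m r ->
  foldr (reflection m) f r = f.
Proof.
move=> mE [[s ->] | [s [t [st_ne [_ ->]]]]]; first exact: reflection_invol.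
case: f => [[[a b] c] d]; case: mE => ->; move: st_ne;
case: s => [[|[|[|[|?]]]] ?]; case: t => [[|[|[|[|?]]]] ?] // _;
by rewrite /reflection /cartan /coord /=; congr (_, _, _, _); ring.
Qed.
End GeometricRepresentation.

Section PingPongW1W2.
Local Open Scope ring_scope.

Definition chamber_point : vec := (1, 1, 1, 1).

Ltac solve_region := rewrite /reflection /cartan /coord /=; lia.

Definition W1_blockA (u : bool * bool) : seq 'I_4 := if u.1 then [:: l1] else [:: l0; l1].
Definition W1_blockB (u : bool * bool) : seq 'I_4 := if u.2 then [:: l2] else [:: l3; l2].

Definition W1_cone (f : vec) : Prop := let '(a, b, c, d) := f in
  1 <= b + c /\ 1 <= a + b + c /\ 1 <= b + c + d /\ 1 <= a + b + c + d.

Definition W1_regionA (u : bool * bool) (f : vec) : Prop :=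
  W1_cone f /\ let '(a, b, c, d) := f in
  if u.1 then 1 <= - b /\ 1 <= a /\ 1 <= c /\ 1 <= c + d
  else 1 <= - a /\ 1 <= - a - b /\ 1 <= c /\ 1 <= c + d.

Definition W1_regionB (u : bool * bool) (f : vec) : Prop :=
  W1_cone f /\ let '(a, b, c, d) := f in
  if u.2 then 1 <= - c /\ 1 <= d /\ 1 <= b /\ 1 <= a + b
  else 1 <= - d /\ 1 <= - c - d /\ 1 <= b /\ 1 <= a + b.

Lemma W1_block_word_inj :
  injective (fun c => foldr (reflection M1) chamber_point (block_word W1_blockA W1_blockB c)).
Proof.
apply: (pingpong_inj (reflection_invol M1) (RA := W1_regionA) (RB := W1_regionB)).
- move=> [a b] [[[x y] z] w] [[-> -> -> ->] | [[a' b'] []]];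
  rewrite /W1_regionA /W1_regionB /W1_cone; [|case: a']; case: b; solve_region.
- move=> [a b] [[[x y] z] w]; rewrite /W1_regionA /W1_regionB /W1_cone.
  by case: a; case: b; solve_region.
- move=> [a b] [a' b'] [[[x y] z] w]; rewrite /W1_regionA.
  by case: a; case: a' => //=; lia.
- move=> [a b] [a' b'] [[[x y] z] w]; rewrite /W1_regionB.
  by case: b; case: b' => //=; lia.
- by move=> [a b]; rewrite /W1_regionA /=; case: a; lia.
- by move=> [[] []] [[] []].
Qed.

Definition W2_blockA (u : bool * bool) : seq 'I_4 :=
  match u with
  | (true, true) => [:: l1] | (true, false) => [:: l2; l1]
  | (false, true) => [:: l3; l1] | (false, false) => [:: l3; l2; l1]
  end.
Definition W2_blockB (u : bool * bool) : seq 'I_4 := [:: l0].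

Definition W2_cone (f : vec) : Prop := let '(a, b, c, d) := f in
  1 <= a + b /\ 1 <= a + b + c /\ 1 <= a + b + d /\ 1 <= a + b + c + d.

Definition W2_regionA (u : bool * bool) (f : vec) : Prop :=
  W2_cone f /\ let '(a, b, c, d) := f in
  1 <= a /\
  match u with
  | (true, true) => 1 <= - b /\ 1 <= d /\ 1 <= c /\ 1 <= b + c + d
  | (true, false) => 1 <= - c /\ 1 <= - b - c /\ 1 <= d /\ 1 <= b + d
  | (false, true) => 1 <= - d /\ 1 <= - b - d /\ 1 <= c /\ 1 <= b + c
  | (false, false) => 1 <= - d /\ 1 <= - c /\ 1 <= - b - c - d /\ 1 <= b
  end.

Definition W2_regionB (u : bool * bool) (f : vec) : Prop :=
  W2_cone f /\ let '(a, b, c, d) := f in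
  1 <= - a /\ 1 <= b /\ 1 <= b + c /\ 1 <= b + d /\ 1 <= b + c + d.

Lemma W2_block_word_inj :
  injective (fun c => foldr (reflection M2) chamber_point (block_word W2_blockA W2_blockB c)).
Proof.
apply: (pingpong_inj (reflection_invol M2) (RA := W2_regionA) (RB := W2_regionB)).
- move=> u [[[x y] z] w] [[-> -> -> ->] | [[a' b'] []]];
  rewrite /W2_regionA /W2_regionB /W2_cone; [|case: a'; case: b']; solve_region.
- move=> [a b] [[[x y] z] w]; rewrite /W2_regionA /W2_regionB /W2_cone.
  by case: a; case: b; solve_region.
- move=> [a b] [a' b'] [[[x y] z] w]; rewrite /W2_regionA.
  by case: a; case: b; case: a'; case: b' => //=; lia.
- by [].
- by move=> [a b]; rewrite /W2_regionA /=; case: a; case: b; lia.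
- by move=> [[] []] [[] []].
Qed.
End PingPongW1W2.

Definition block_len (u : bool * bool) : nat :=
  match u with (true, true) => 2 | (false, false) => 4 | _ => 3 end.

Definition all_blocks : seq (bool * bool) :=
  [:: (true, true); (true, false); (false, true); (false, false)].

(* Sequences of blocks of total length at most n (all of them once fuel >= n). *)
Fixpoint block_seqs (fuel n : nat) : seq (seq (bool * bool)) :=
  if fuel is f.+1 then
    [::] :: flatten [seq [seq u :: c | c <- block_seqs f (n - block_len u)]
                    | u <- all_blocks & (block_len u <= n)%N]
  else [:: [::]].

Lemma block_seqs_S f n : block_seqs f.+1 n =
  [::] :: flatten [seq [seq u :: c | c <- block_seqs f (n - block_len u)]
                  | u <- all_blocks & (block_len u <= n)%N].
Proof. by []. Qed.

Lemma size_block_word_block_seqs n (blockA blockB : bool * bool -> seq 'I_n) :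
  (forall u, size (blockA u ++ blockB u) = block_len u) ->
  forall f k c, c \in block_seqs f k -> (size (block_word blockA blockB c) <= k)%N.
Proof.
move=> block_size; elim=> [|f IH] k c; first by rewrite inE => /eqP ->.
rewrite block_seqs_S inE => /orP[/eqP -> // | /flattenP[_ /mapP[u] + -> /mapP[c' c'_in ->]]].
rewrite mem_filter => /andP[u_le _].
rewrite block_word_cons catA size_cat block_size -(subnKC u_le) leq_add2l.
exact: IH c'_in.
Qed.

Lemma block_seqs_uniq f k : uniq (block_seqs f k).
Proof.
elim: f k => [//|f IH] k; rewrite block_seqs_S cons_uniq; apply/andP; split.
  by apply/negP => /flattenP[_ /mapP[u _ ->] /mapP[c _]].
have : uniq [seq u <- all_blocks | (block_len u <= k)%N] by rewrite filter_uniq.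
elim: [seq u <- _ | _] => //= u us IHus.
move=> /andP[u_notin us_uniq]; rewrite cat_uniq map_inj_uniq ?IH ?IHus ?andbT //=; last first.
  by move=> a b [].
apply/hasPn => _ /flattenP[_ /mapP[u' u'_in ->] /mapP[c _ ->]].
by apply/negP => /mapP[c' _ [u'_eq _]]; rewrite -u'_eq u'_in in u_notin.
Qed.

Lemma size_block_seqs_rec f k : size (block_seqs f.+1 k.+4) =
  (size (block_seqs f k.+2) + (size (block_seqs f k.+1) + (size (block_seqs f k.+1)
     + size (block_seqs f k)))).+1.
Proof. by rewrite /= !size_cat !size_map !subSS !subn0 /= addn0. Qed.

Section BlockCount.
Variable R : realType.
Local Open Scope ring_scope.

Lemma size_block_seqs_ge f k : (k <= f)%N ->
  1/8 * (8/5) ^+ k <= (size (block_seqs f k))%:R :> R.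
Proof.
elim: f k => [|f IH] k; first by rewrite leqn0 => /eqP -> /=; rewrite expr0; lra.
case: k => [|[|[|[|k]]]] k_le; last first.
2-5: apply: (@le_trans _ _ 1); last by rewrite ler1n; case: (f).
2-5: by rewrite ?exprS ?expr0; lra.
have k_le' : (k.+3 <= f)%N by rewrite -ltnS.
have h2 := IH k.+2 (ltnW k_le').
have h1 := IH k.+1 (ltnW (ltnW k_le')).
have h0 := IH k (ltnW (ltnW (ltnW k_le'))).
rewrite size_block_seqs_rec -[(size (block_seqs f k.+2) + _).+1%:R]natr1 !natrD.
have x_ge0 : 0 <= (8/5 : R) ^+ k by apply: exprn_ge0; lra.
rewrite !exprS in h2 h1 *; set x := (8/5 : R) ^+ k in h2 h1 h0 x_ge0 *.
lra.
Qed.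
End BlockCount.

Section LowerBounds.
Variable R : realType.
Local Open Scope ring_scope.

Lemma growth_rate_ge_blocks n (m : 'I_n -> 'I_n -> nat)
    (blockA blockB : bool * bool -> seq 'I_n) :
  (forall u, size (blockA u ++ blockB u) = block_len u) ->
  (forall c c', cox_eq m (block_word blockA blockB c) (block_word blockA blockB c') -> c = c') ->
  ((39/25 : R)%:E <= growth_rate R m)%E.
Proof.
move=> block_size block_inj.
apply: (@limn_esup_root_ge _ _ (1/8) (8/5)) => [||| k]; try lra.
apply: le_trans (size_block_seqs_ge R (leqnn k)) _; rewrite ler_nat.
rewrite -(size_map (block_word blockA blockB)); apply: size_le_sum_growth_coeff.
- rewrite map_inj_in_uniq ?block_seqs_uniq // => c c' _ _ E.
  by apply: block_inj; rewrite E; apply: cox_eq_refl.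
- by move=> _ /mapP[c c_in ->]; apply: size_block_word_block_seqs block_size _ _ _ c_in.
- by move=> _ _ /mapP[c _ ->] /mapP[c' _ ->] /block_inj ->.
Qed.

Lemma growth_rate_M1_ge : ((39/25 : R)%:E <= growth_rate R M1)%E.
Proof.
apply: (growth_rate_ge_blocks (blockA := W1_blockA) (blockB := W1_blockB)); first by case=> [[] []].
move=> c c' cc'; apply: W1_block_word_inj.
by apply: cox_eq_foldr cc' _ => r f; apply: reflection_relator; left.
Qed.

Lemma growth_rate_M2_ge : ((39/25 : R)%:E <= growth_rate R M2)%E.
Proof.
apply: (growth_rate_ge_blocks (blockA := W2_blockA) (blockB := W2_blockB)); first by case=> [[] []].
move=> c c' cc'; apply: W2_block_word_inj.
by apply: cox_eq_foldr cc' _ => r f; apply: reflection_relator; right.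
Qed.
End LowerBounds.

Local Open Scope ereal_scope.

Theorem lemma3p1 (R : realType) :
  growth_rate R M0 < growth_rate R M1 /\ growth_rate R M0 < growth_rate R M2.
Proof.
have W0_lt m : (39/25 : R)%:E <= growth_rate R m -> growth_rate R M0 < growth_rate R m.
  by move=> m_ge; apply: le_lt_trans (growth_rate_M0_le R) (lt_le_trans _ m_ge); rewrite lte_fin; lra.
by split; apply: W0_lt; [exact: growth_rate_M1_ge | exact: growth_rate_M2_ge].
Qed.
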